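(* For every integer $n\ge 3$, let $t(n)$ denote the largest positive integer $k$ such that there exists a positive tribonacci sequence of length $k$ terminating at $n$. Then there are at most $561001$ positive tribonacci sequences of length $t(n)$ terminating at $n$.
   Context: A tribonacci sequence of length $k$ is a sequence of integers $\langle a_i\rangle_{i=1}^k$ such that $a_i=a_{i-1}+a_{i-2}+a_{i-3}$ for all $4\le i\le k$. It terminates at $a_k$. It is positive if $a_1,a_2,a_3>0$ (for length less than 3, all terms are required to be positive). For $n\ge 3$ the set of such $k$ is non-empty and bounded, so $t(n)$ is well defined. *)

From mathcomp Require Import all_boot all_order all_algebra.
Set Implicit Arguments. Unset Strict Implicit. Unset Printing Implicit Defensive.
Import Order.TTheory GRing.Theory Num.Theory.
Local Open Scope ring_scope.

(* A finite sequence of integers a_1, ..., a_k is represented by the list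
   s = [:: a_1; ...; a_k] (0-indexed: nth 0 s i = a_(i+1)); its length is size s. *)

Definition is_tribonacci (s : seq int) : Prop :=
  forall i : nat, (3 <= i)%N -> (i < size s)%N ->
    nth 0 s i = nth 0 s (i - 1)%N + nth 0 s (i - 2)%N + nth 0 s (i - 3)%N.

Definition trib_positive (s : seq int) : Prop :=
  forall i : nat, (i < minn 3 (size s))%N -> 0 < nth 0 s i.

Definition terminates_at (n : int) (s : seq int) : Prop :=
  (0 < size s)%N /\ last 0 s = n.

Definition pos_trib_seq (n : int) (k : nat) (s : seq int) : Prop :=
  size s = k /\ is_tribonacci s /\ trib_positive s /\ terminates_at n s.

Definition is_t (n : int) (k : nat) : Prop :=
  (0 < k)%N /\ (exists s, pos_trib_seq n k s) /\
  (forall k' s, (0 < k')%N -> pos_trib_seq n k' s -> (k' <= k)%N).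

From mathcomp Require Import all_boot all_order all_algebra.
From mathcomp Require Import ring lra zify realalg.
Import Order.TTheory GRing.Theory Num.Theory.
Local Open Scope ring_scope.
Set Implicit Arguments. Unset Strict Implicit. Unset Printing Implicit Defensive.

(* Let r ~ 1.839 be the real root of x^3 = x^2 + x + 1. For three consecutive
   terms (a, b, c) of a tribonacci sequence, the linear form
   U = c + (r - 1) b + (r^2 - r - 1) a is multiplied by r at each step, while a
   positive definite quadratic form G in (b - r a, c - r b) is divided by r (the
   other two roots have modulus r^(-1/2)). Since G <= 20 U^2 on positive triples,
   transporting to the first triple shows r^(3m) G <= 20 U^2 on the triple at
   index m of a positive sequence; conversely 20 r^(3m) G < U^2 there forces all
   earlier terms to be positive. Building a sequence backwards from the triple
   (floor(floor(n/r)/r), floor(n/r), n), the maximality of k = t(n) thus yields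
   n^2 <= 180 r^(3(k-2)), so every sequence of length t(n) ending at n has
   G <= 3600 r^5 on its last triple (x, y, n). This confines n - r y and y - r x
   to fixed windows, and as a sequence is determined by its last three terms,
   there are at most 425 * 831 of them. *)

Lemma uniq_size_le_box (T : eqType) (L : seq T) (f g : T -> int) (w1 w2 : nat) :
  uniq L -> {in L &, forall a b, f a = f b -> g a = g b -> a = b} ->
  {in L &, forall a b, f a - f b <= w1%:Z} -> {in L &, forall a b, g a - g b <= w2%:Z} ->
  (size L <= w1.+1 * w2.+1)%N.
Proof.
case: L => [//|a0 L0]; set L := a0 :: L0 => uL inj spread_f spread_g.
pose lo (h : T -> int) := \big[Order.min/h a0]_(b <- L | b \in L) h b.
have lo_bounds (h : T -> int) w b : {in L &, forall a b, h a - h b <= w%:Z} -> b \in L ->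
    0 <= h b - lo h <= w%:Z.
  move=> sp hb; rewrite subr_ge0 ge_bigmin_seq //= lerBlDr addrC -lerBlDr.
  by apply: le_bigmin => [|c hc]; rewrite lerBlDr addrC -lerBlDr sp ?mem_head.
rewrite -[w1.+1](size_iota 0) -[w2.+1](size_iota 0).
rewrite -(size_allpairs (fun i j : nat => (lo f + i%:Z, lo g + j%:Z))).
rewrite -(size_map (fun b => (f b, g b))).
apply: uniq_leq_size.
  by rewrite map_inj_in_uniq // => a b ha hb []; exact: inj.
move=> _ /mapP [b hb ->].
case/andP: (lo_bounds f w1 b spread_f hb) => f0 f1.
case/andP: (lo_bounds g w2 b spread_g hb) => g0 g1.
rewrite -[f b](subrK (lo f)) -[g b](subrK (lo g)) -(gez0_abs f0) -(gez0_abs g0) ![_ + lo _]addrC.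
by apply: allpairs_f; rewrite mem_iota /= -ltz_nat gez0_abs // ltz_addr1.
Qed.

Lemma ex_nat_floor_div (R : realFieldType) (r : R) (m : nat) : 1 <= r ->
  exists y : nat, r * y%:R <= m%:R < r * (y%:R + 1).
Proof.
move=> r_ge1.
have exP : exists y : nat, r * y%:R <= m%:R by exists 0%N; rewrite mulr0 ler0n.
have ubP y : r * y%:R <= m%:R -> (y <= m)%N.
  by move=> hy; rewrite -(ler_nat R); have := ler0n R y; nra.
case: (ex_maxnP exP ubP) => y hy hmax.
exists y; rewrite hy /= ltNge; apply/negP; rewrite natr1 => /hmax.
by rewrite ltnn.
Qed.

Lemma intr_le_of_mul (R : realFieldType) (r B : R) (d : int) (N : nat) :
  0 < r -> r * d%:~R <= B -> B < r * N.+1%:R -> d <= N%:Z.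
Proof.
move=> r_gt0 hB hN.
have : (d%:~R : R) < N.+1%:R by rewrite -(ltr_pM2l r_gt0); apply: le_lt_trans hN.
by rewrite pmulrn ltr_int; lia.
Qed.

Lemma bounds_of_sqr_le (R : realDomainType) (x c : R) :
  0 <= c -> x ^+ 2 <= c ^+ 2 -> - c <= x <= c.
Proof. by move=> c_ge0; rewrite -(real_normK (num_real x)) ler_sqr ?nnegrE // ler_norml. Qed.

Lemma is_tribonacciP (s : seq int) :
  is_tribonacci s <->
  forall m, (m.+3 < size s)%N -> s`_m.+3 = s`_m + s`_m.+1 + s`_m.+2.
Proof.
split=> hs => [m hm | i hi3 hi].
  by rewrite hs // !subSS !subn0; ring.
have [m em] : exists m, i = m.+3 by exists (i - 3)%N; lia.
by subst i; rewrite hs // !subSS !subn0; ring.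
Qed.

Lemma is_tribonacci_cons (a : int) (s : seq int) : (3 <= size s)%N ->
  is_tribonacci (a :: s) <-> is_tribonacci s /\ s`_2 = a + s`_0 + s`_1.
Proof.
move=> hs; rewrite !is_tribonacciP; split=> [h | [h h0] [|m] hm //=].
  by split=> [m hm|]; [exact: (h m.+1) | exact: (h 0%N)].
exact: h.
Qed.

Lemma trib_positive_all (s : seq int) : is_tribonacci s -> trib_positive s ->
  forall i, (i < size s)%N -> 0 < s`_i.
Proof.
move/is_tribonacciP=> hs hp; elim/ltn_ind => i IH hi.
case: (ltnP i 3) => hi3; first by apply: hp; lia.
have [m em] : exists m, i = m.+3 by exists (i - 3)%N; lia.
by rewrite em hs -?em // !addr_gt0 // IH //; lia.
Qed.

Lemma tribonacci_eq (s1 s2 : seq int) :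
  is_tribonacci s1 -> is_tribonacci s2 -> size s1 = size s2 -> (3 <= size s1)%N ->
  (forall i, (size s1 - 3 <= i)%N -> s1`_i = s2`_i) -> s1 = s2.
Proof.
elim: s1 s2 => [|a t IH] [|a' t'] //= h1 h2 [esz] hsz hsuf.
case: (ltnP (size t) 3) => ht.
  apply: (@eq_from_nth _ 0) => /= [|i _]; first by rewrite esz.
  by apply: hsuf; lia.
have ht' : (3 <= size t')%N by rewrite -esz.
case/(is_tribonacci_cons a ht): h1 => h1 e1.
case/(is_tribonacci_cons a' ht'): h2 => h2 e2.
have et : t = t' by apply: IH => // i hi; apply: (hsuf i.+1); lia.
subst t'; congr cons.
by apply/(addIr t`_0)/(addIr t`_1); rewrite -e1 -e2.
Qed.

Definition trib_prev (s : seq int) : seq int := s`_2 - s`_0 - s`_1 :: s.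

Definition trib_back (j : nat) (x y z : int) : seq int := iter j trib_prev [:: x; y; z].

Lemma size_trib_back j x y z : size (trib_back j x y z) = j.+3.
Proof. by elim: j => //= j IH; rewrite IH. Qed.

Lemma nth_trib_back j x y z i : (trib_back j x y z)`_(j + i) = [:: x; y; z]`_i.
Proof. by elim: j => //= j. Qed.

Lemma is_tribonacci_trib_back j x y z : is_tribonacci (trib_back j x y z).
Proof.
elim: j => [|j IH] /=; first by move=> i hi3 hi; rewrite /= in hi; lia.
by rewrite /trib_prev is_tribonacci_cons ?size_trib_back //; split=> //; ring.
Qed.

Lemma pos_trib_seq_last n k s : pos_trib_seq n k s -> s`_k.-1 = n.
Proof. by case=> <- [_ [_ [_ <-]]]; rewrite nth_last. Qed.

Lemma pos_trib_seq_eq n m s1 s2 : pos_trib_seq n m.+3 s1 -> pos_trib_seq n m.+3 s2 ->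
  s1`_m = s2`_m -> s1`_m.+1 = s2`_m.+1 -> s1 = s2.
Proof.
move=> h1 h2 e0 e1; have [sz1 [t1 _]] := h1; have [sz2 [t2 _]] := h2.
apply: tribonacci_eq; rewrite ?sz1 ?sz2 // => i hi.
case: (ltnP i m.+3) => him; last by rewrite !nth_default ?sz1 ?sz2.
have : (i = m \/ i = m.+1 \/ i = m.+2)%N by lia.
by case=> [->|[->|->]] //; rewrite (pos_trib_seq_last h1) (pos_trib_seq_last h2).
Qed.

Lemma is_t_ge4 n k : 3 <= n -> is_t n k -> (4 <= k)%N.
Proof.
move=> hn [_ [_ hmax]]; apply: (hmax 4%N [:: 1; 1; n - 2; n]) => //.
split=> //; split; last split=> //.
  by apply/is_tribonacciP => -[|m] //= _; ring.
by move=> [|[|[|i]]] //= _; lia.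
Qed.

Lemma tribonacci_constant (R : rcfType) :
  exists r : R, 103 / 56 <= r <= 252 / 137 /\ r ^+ 3 = r ^+ 2 + r + 1.
Proof.
have [||r r_range] := @poly_ivt R ('X^3 - 'X^2 - 'X - 1) (103 / 56) (252 / 137).
- lra.
- by rewrite !hornerE; apply/andP; split; lra.
rewrite /root !hornerE => /eqP r_root; exists r; split => //.
by apply/eqP; rewrite -subr_eq0 -r_root; apply/eqP; ring.
Qed.

Section TribonacciForms.

Variables (R : realFieldType) (r : R).

Definition lead_form (a b c : R) : R := c + (r - 1) * b + (r ^+ 2 - r - 1) * a.

Definition tail_form (a b c : R) : R :=
  (c - r * b) ^+ 2 + (r - 1) * (b - r * a) * (c - r * b) + (r ^+ 2 - r - 1) * (b - r * a) ^+ 2.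

Definition lead_at (s : seq int) (m : nat) : R :=
  lead_form (s`_m)%:~R (s`_m.+1)%:~R (s`_m.+2)%:~R.

Definition tail_at (s : seq int) (m : nat) : R :=
  tail_form (s`_m)%:~R (s`_m.+1)%:~R (s`_m.+2)%:~R.

Section Invariance.

Hypothesis r_root : r ^+ 3 = r ^+ 2 + r + 1.

Lemma lead_formS a b c : lead_form b c (a + b + c) = r * lead_form a b c.
Proof.
apply/eqP; rewrite -subr_eq0; apply/eqP.
transitivity (a * (r ^+ 2 + r + 1 - r ^+ 3)); first by rewrite /lead_form; ring.
by rewrite r_root subrr mulr0.
Qed.

Lemma tail_formS a b c : r * tail_form b c (a + b + c) = tail_form a b c.
Proof.
apply/eqP; rewrite -subr_eq0; apply/eqP.
transitivity ((r ^+ 3 - r ^+ 2 - r - 1) *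
  (c ^+ 2 - b * c - b ^+ 2 - r * b * c - r * a ^+ 2 + r ^+ 2 * b ^+ 2)).
  by rewrite /tail_form; ring.
by rewrite r_root; ring.
Qed.

Lemma lead_at_shift s i j : is_tribonacci s -> (i + j + 2 < size s)%N ->
  lead_at s (i + j) = r ^+ j * lead_at s i.
Proof.
move/is_tribonacciP=> hs; elim: j => [|j IH] hij; first by rewrite addn0 mul1r.
rewrite addnS /lead_at (hs (i + j)%N); last lia.
rewrite !rmorphD /= lead_formS -/(lead_at s (i + j)) IH; last lia.
by rewrite exprS mulrA.
Qed.

Lemma tail_at_shift s i j : is_tribonacci s -> (i + j + 2 < size s)%N ->
  tail_at s i = r ^+ j * tail_at s (i + j).
Proof.
move/is_tribonacciP=> hs; elim: j => [|j IH] hij; first by rewrite addn0 mul1r.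
rewrite IH; last lia.
rewrite addnS {1}/tail_at -tail_formS /tail_at (hs (i + j)%N); last lia.
by rewrite !rmorphD /= exprSr mulrA.
Qed.

End Invariance.

Section Bounds.

Hypothesis r_range : 103 / 56 <= r <= 252 / 137.

Lemma tail_coef_bounds : 54 / 100 <= r ^+ 2 - r - 1 <= 545 / 1000.
Proof.
have /andP[r_lb r_ub] := r_range.
have e1 : 0 <= (r - 103 / 56) * (r + 47 / 56) by apply: mulr_ge0; lra.
have e2 : 0 <= (252 / 137 - r) * (r + 115 / 137) by apply: mulr_ge0; lra.
apply/andP; split; nra.
Qed.

Lemma sqr_cb_le_tail a b c : (c - r * b) ^+ 2 <= 2 * tail_form a b c.
Proof.
have /andP[r_lb r_ub] := r_range; have /andP[q_lb q_ub] := tail_coef_bounds.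
rewrite /tail_form; set q := r ^+ 2 - r - 1 in q_lb q_ub *.
set S0 := b - r * a; set S1 := c - r * b.
rewrite -subr_ge0.
have -> : 2 * (S1 ^+ 2 + (r - 1) * S0 * S1 + q * S0 ^+ 2) - S1 ^+ 2 =
          (S1 + (r - 1) * S0) ^+ 2 + (2 * q - (r - 1) ^+ 2) * S0 ^+ 2 by ring.
by apply: addr_ge0; rewrite ?sqr_ge0 // mulr_ge0 ?sqr_ge0 //; nra.
Qed.

Lemma sqr_ba_le_tail a b c : (b - r * a) ^+ 2 <= 4 * tail_form a b c.
Proof.
have /andP[r_lb r_ub] := r_range; have /andP[q_lb q_ub] := tail_coef_bounds.
rewrite /tail_form; set q := r ^+ 2 - r - 1 in q_lb q_ub *.
set S0 := b - r * a; set S1 := c - r * b.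
rewrite -subr_ge0.
have -> : 4 * (S1 ^+ 2 + (r - 1) * S0 * S1 + q * S0 ^+ 2) - S0 ^+ 2 =
          (2 * S1 + (r - 1) * S0) ^+ 2 + (4 * q - 1 - (r - 1) ^+ 2) * S0 ^+ 2 by ring.
by apply: addr_ge0; rewrite ?sqr_ge0 // mulr_ge0 ?sqr_ge0 //; nra.
Qed.

Lemma tail_form_ge0 a b c : 0 <= tail_form a b c.
Proof. by have := sqr_ba_le_tail a b c; have := sqr_ge0 (b - r * a); lra. Qed.

Lemma tail_form_le_lead a b c : 0 < a -> 0 < b -> 0 < c ->
  tail_form a b c <= 20 * lead_form a b c ^+ 2.
Proof.
move=> ha hb hc; have /andP[r_lb r_ub] := r_range; have /andP[q_lb q_ub] := tail_coef_bounds.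
rewrite /tail_form /lead_form; set q := r ^+ 2 - r - 1 in q_lb q_ub *.
set S0 := b - r * a; set S1 := c - r * b; set U := c + (r - 1) * b + q * a.
have ra : 0 <= r * a by rewrite mulr_ge0 //; lra.
have rb : 0 <= r * b by rewrite mulr_ge0 //; lra.
have qa : 0 <= (q - 54 / 100) * a by rewrite mulr_ge0 //; lra.
have ra' : 0 <= (184 / 100 - r) * a by rewrite mulr_ge0 //; lra.
have rb' : 0 <= (r - 103 / 56) * b by rewrite mulr_ge0 //; lra.
have S0_sq : S0 ^+ 2 <= (7 / 2 * U) ^+ 2.
  by rewrite -subr_ge0 subr_sqr mulr_ge0 // /S0 /U; lra.
have S1_sq : S1 ^+ 2 <= (11 / 5 * U) ^+ 2.
  by rewrite -subr_ge0 subr_sqr mulr_ge0 // /S1 /U; lra.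
have e1 : 0 <= (r - 1) * (63 / 100 * S0 - S1) ^+ 2 by rewrite mulr_ge0 ?sqr_ge0 //; lra.
have e2 : 0 <= (184 / 100 - r) * S0 ^+ 2 by rewrite mulr_ge0 ?sqr_ge0 //; lra.
have e3 : 0 <= (184 / 100 - r) * S1 ^+ 2 by rewrite mulr_ge0 ?sqr_ge0 //; lra.
have e4 : 0 <= (545 / 1000 - q) * S0 ^+ 2 by rewrite mulr_ge0 ?sqr_ge0 //; lra.
nra.
Qed.

Lemma sqr_comb_le_tail a b c :
  (c - r * b + (2 * r - 1) * (b - r * a)) ^+ 2 <= 20 * tail_form a b c.
Proof.
have /andP[r_lb r_ub] := r_range; have /andP[q_lb q_ub] := tail_coef_bounds.
rewrite /tail_form; set q := r ^+ 2 - r - 1 in q_lb q_ub *.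
set S0 := b - r * a; set S1 := c - r * b.
set B := 20 * (r - 1) - 2 * (2 * r - 1); set D := 20 * q - (2 * r - 1) ^+ 2.
rewrite -subr_ge0.
have -> : 20 * (S1 ^+ 2 + (r - 1) * S0 * S1 + q * S0 ^+ 2) - (S1 + (2 * r - 1) * S0) ^+ 2
          = 19 * (S1 + B / 38 * S0) ^+ 2 + (D - B ^+ 2 / 76) * S0 ^+ 2 by rewrite /B /D; field.
apply: addr_ge0; first by rewrite mulr_ge0 ?sqr_ge0.
rewrite mulr_ge0 ?sqr_ge0 // /B /D.
have e1 : 0 <= (r - 103 / 56) * (r + 103 / 56) by apply: mulr_ge0; lra.
have e2 : 0 <= (184 / 100 - r) * (r + 184 / 100) by apply: mulr_ge0; lra.
nra.
Qed.

Lemma lead_tail_gt0 a b c : 0 < lead_form a b c ->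
  20 * tail_form a b c < lead_form a b c ^+ 2 -> 0 < a.
Proof.
move=> U_gt0 tail_lt; have /andP[r_lb r_ub] := r_range.
set V := c - r * b + (2 * r - 1) * (b - r * a).
have V_lt : V < lead_form a b c.
  rewrite ltNge; apply/negP => U_le.
  have : lead_form a b c ^+ 2 <= V ^+ 2 by rewrite ler_sqr ?nnegrE //; lra.
  by have := sqr_comb_le_tail a b c; rewrite -/V; lra.
have e : lead_form a b c - V = (3 * r ^+ 2 - 2 * r - 1) * a by rewrite /V /lead_form; ring.
have : 0 < (3 * r ^+ 2 - 2 * r - 1) * a by rewrite -e subr_gt0.
by rewrite pmulr_rgt0 //; nra.
Qed.

Lemma tail_form_small a b c : 0 <= b - r * a <= r -> 0 <= c - r * b <= r ->
  tail_form a b c <= 9.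
Proof.
move=> /andP[S0_ge0 S0_le] /andP[S1_ge0 S1_le].
have /andP[r_lb r_ub] := r_range; have /andP[q_lb q_ub] := tail_coef_bounds.
rewrite /tail_form; set q := r ^+ 2 - r - 1 in q_lb q_ub *.
set S0 := b - r * a in S0_ge0 S0_le *; set S1 := c - r * b in S1_ge0 S1_le *.
have e1 : S1 ^+ 2 <= r ^+ 2 by rewrite ler_sqr ?nnegrE //; lra.
have e2 : S0 ^+ 2 <= r ^+ 2 by rewrite ler_sqr ?nnegrE //; lra.
have e3 : (r - 1) * S0 * S1 <= (r - 1) * r * r.
  by rewrite -!mulrA ler_wpM2l ?ler_pM //; lra.
have e4 : q * S0 ^+ 2 <= q * r ^+ 2 by rewrite ler_wpM2l //; lra.
nra.
Qed.

Lemma lead_form_ge a b c : 0 <= a -> 0 <= b -> c <= lead_form a b c.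
Proof.
move=> ha hb; have /andP[r_lb _] := r_range; have /andP[q_lb _] := tail_coef_bounds.
rewrite /lead_form; set q := r ^+ 2 - r - 1 in q_lb *.
have f1 : 0 <= (r - 1) * b by rewrite mulr_ge0 //; lra.
have f2 : 0 <= q * a by rewrite mulr_ge0 //; lra.
lra.
Qed.

Lemma lead_form_le a b c : 0 <= a -> 0 <= b -> a + b <= c -> lead_form a b c <= r * c.
Proof.
move=> ha hb hc; have /andP[r_lb _] := r_range; have /andP[_ q_ub] := tail_coef_bounds.
rewrite /lead_form; set q := r ^+ 2 - r - 1 in q_ub *.
have f1 : 0 <= (r - 1 - q) * a by rewrite mulr_ge0 //; lra.
have f2 : (r - 1) * (a + b) <= (r - 1) * c by rewrite ler_wpM2l //; lra.
nra.
Qed.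

Lemma tail_form_window a b c : tail_form a b c <= 3600 * r ^+ 5 ->
  - 390 <= c - r * b <= 390 /\ - 552 <= b - r * a <= 552.
Proof.
move=> small; have /andP[r_lb r_ub] := r_range.
have r5 : r ^+ 5 <= 2106 / 100.
  apply: le_trans (_ : (252 / 137) ^+ 5 <= _); last lra.
  by rewrite ler_pXn2r // nnegrE; lra.
split; apply: bounds_of_sqr_le => //.
  by apply: le_trans (sqr_cb_le_tail a b c) _; lra.
by apply: le_trans (sqr_ba_le_tail a b c) _; lra.
Qed.

End Bounds.

Section Sequences.

Hypotheses (r_root : r ^+ 3 = r ^+ 2 + r + 1) (r_range : 103 / 56 <= r <= 252 / 137).

Lemma tail_at_le_lead_at s m : is_tribonacci s -> trib_positive s -> (m.+2 < size s)%N ->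
  r ^+ (3 * m) * tail_at s m <= 20 * lead_at s m ^+ 2.
Proof.
move=> ht hp hm; have /andP[r_lb _] := r_range.
have pos := trib_positive_all ht hp.
have tail0 : tail_at s 0 <= 20 * lead_at s 0 ^+ 2.
  by apply: (tail_form_le_lead r_range); rewrite ltr0z pos //; lia.
have hm' : (0 + m + 2 < size s)%N by lia.
have := lead_at_shift r_root ht hm'; have := tail_at_shift r_root ht hm'; rewrite add0n => T0 L0.
have -> : r ^+ (3 * m) = (r ^+ m) ^+ 2 * r ^+ m by rewrite -exprM -exprD; congr (_ ^+ _); lia.
rewrite -mulrA -T0 L0 exprMn mulrCA ler_wpM2l ?sqr_ge0 //.
Qed.

Lemma gt0_of_tail_at_lt s m i : is_tribonacci s -> (m.+2 < size s)%N -> (i <= m)%N ->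
  0 < lead_at s m -> 20 * r ^+ (3 * m) * tail_at s m < lead_at s m ^+ 2 -> 0 < s`_i.
Proof.
move=> ht hm him; have /andP[r_lb _] := r_range.
have r_gt0 : 0 < r by lra.
rewrite -(subnKC him) in hm *; set j := (m - i)%N.
have hm' : (i + j + 2 < size s)%N by lia.
rewrite (lead_at_shift r_root ht hm') pmulr_rgt0 ?exprn_gt0 // => U_gt0 tail_lt.
rewrite -(ltr0z R); apply: (lead_tail_gt0 r_range U_gt0).
have rj_gt0 : 0 < r ^+ j by rewrite exprn_gt0.
rewrite -(ltr_pM2l (exprn_gt0 2 rj_gt0)) -/(lead_at s i) -/(tail_at s i).
rewrite (tail_at_shift r_root ht hm') -exprMn; apply: le_lt_trans tail_lt.
have -> : (r ^+ j) ^+ 2 * (20 * (r ^+ j * tail_at s (i + j))) =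
          20 * (r ^+ j) ^+ 3 * tail_at s (i + j) by ring.
rewrite -exprM mulnC ler_wpM2r ?(tail_form_ge0 r_range) // ler_wpM2l // ler_eXn2l; first lia.
lra.
Qed.

Lemma pos_trib_seq_trib_back j x y z : (2 <= j)%N ->
  0 < lead_form x%:~R y%:~R z%:~R ->
  20 * r ^+ (3 * j) * tail_form x%:~R y%:~R z%:~R < lead_form x%:~R y%:~R z%:~R ^+ 2 ->
  pos_trib_seq z j.+3 (trib_back j x y z).
Proof.
move=> hj U_gt0 tail_lt; set s := trib_back j x y z.
have ht : is_tribonacci s by exact: is_tribonacci_trib_back.
have hsz : size s = j.+3 := size_trib_back j x y z.
have := nth_trib_back j x y z; rewrite -/s => at_j.
have := at_j 0%N; have := at_j 1%N; have := at_j 2%N; rewrite addn0 addn1 addn2 /= => ez ey ex.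
have eU : lead_at s j = lead_form x%:~R y%:~R z%:~R by rewrite /lead_at ex ey ez.
have eG : tail_at s j = tail_form x%:~R y%:~R z%:~R by rewrite /tail_at ex ey ez.
split=> //; split=> //; split.
  move=> i; rewrite hsz => hi.
  by apply: (gt0_of_tail_at_lt (m := j)); rewrite ?eU ?eG ?hsz //; lia.
by split; rewrite ?hsz // -nth_last hsz.
Qed.

Lemma tail_at_last_le n m s : (0 < m)%N -> pos_trib_seq n m.+3 s ->
  r ^+ (3 * m) * tail_at s m <= 20 * (r * n%:~R) ^+ 2.
Proof.
case: m => // m _ hs; have [hsz [ht [hp [_ hn]]]] := hs.
have pos := trib_positive_all ht hp.
have ez : s`_m.+3 = n by rewrite -hn -nth_last hsz.
apply: le_trans (tail_at_le_lead_at ht hp _) _; first by rewrite hsz.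
have nneg i : (i < m.+4)%N -> (0 : R) <= (s`_i)%:~R by rewrite -hsz ler0z => /pos /ltW.
have U_ge0 : 0 <= lead_at s m.+1.
  by apply: (le_trans (nneg m.+3 (ltnSn _))); apply: (lead_form_ge r_range); rewrite nneg //; lia.
have U_le : lead_at s m.+1 <= r * n%:~R.
  rewrite -ez; apply: (lead_form_le r_range); try by apply: nneg; lia.
  rewrite ((is_tribonacciP s).1 ht m) ?hsz // -!rmorphD ler_int.
  by have := pos m; rewrite hsz; lia.
by rewrite ler_wpM2l // ler_sqr ?nnegrE //; apply: le_trans U_le.
Qed.

Lemma is_t_sqr_le n m : 3 <= n -> is_t n m.+3 -> n%:~R ^+ 2 <= 180 * r ^+ (3 * m.+1).
Proof.
move=> hn ht; have /andP[r_lb r_ub] := r_range.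
have m_gt0 : (0 < m)%N by have := is_t_ge4 hn ht; lia.
have [p ep] : exists p : nat, n = p%:Z by exists `|n|%N; rewrite gez0_abs //; lia.
have p_ge3 : (3 : R) <= p%:R by rewrite -(ler_int R) ep -pmulrn in hn.
have r_ge1 : 1 <= r by lra.
have [y /andP[y_lb y_ub]] := ex_nat_floor_div p r_ge1.
have [x /andP[x_lb x_ub]] := ex_nat_floor_div y r_ge1.
have G_le : tail_form x%:~R y%:~R p%:~R <= 9.
  by rewrite -!pmulrn; apply: (tail_form_small r_range); apply/andP; split; lra.
have U_ge : p%:R <= lead_form x%:~R y%:~R p%:~R.
  by rewrite -!pmulrn; apply: (lead_form_ge r_range); exact: ler0n.
have U_sq_le : lead_form x%:~R y%:~R p%:~R ^+ 2 <=
              20 * r ^+ (3 * m.+1) * tail_form x%:~R y%:~R p%:~R.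
  rewrite leNgt; apply/negP => tail_lt.
  have U_gt0 : 0 < lead_form x%:~R y%:~R p%:~R by lra.
  have [_ [_ hmax]] := ht; rewrite ep in hmax.
  have := hmax m.+4 _ isT (pos_trib_seq_trib_back (j := m.+1) _ U_gt0 tail_lt).
  by rewrite ltnn => /(_ m_gt0).
have rk_ge0 : 0 <= r ^+ (3 * m.+1) by rewrite exprn_ge0 //; lra.
rewrite ep -pmulrn; apply: le_trans (_ : lead_form x%:~R y%:~R p%:~R ^+ 2 <= _).
  by rewrite ler_sqr ?nnegrE //; lra.
apply: le_trans U_sq_le _; nra.
Qed.

Lemma is_t_tail_at_le n m s : 3 <= n -> is_t n m.+3 -> pos_trib_seq n m.+3 s ->
  tail_at s m <= 3600 * r ^+ 5.
Proof.
move=> hn ht hs; have /andP[r_lb _] := r_range.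
have m_gt0 : (0 < m)%N by have := is_t_ge4 hn ht; lia.
have rm_gt0 : 0 < r ^+ (3 * m) by rewrite exprn_gt0 //; lra.
rewrite -(ler_pM2l rm_gt0); apply: le_trans (tail_at_last_le m_gt0 hs) _.
have -> : r ^+ (3 * m) * (3600 * r ^+ 5) = 20 * (r ^+ 2 * (180 * (r ^+ (3 * m) * r ^+ 3))).
  by ring.
by rewrite exprMn ler_wpM2l // ler_wpM2l ?sqr_ge0 // -exprD addnC -mulnS is_t_sqr_le.
Qed.

Lemma close_last_terms s1 s2 m :
  tail_at s1 m <= 3600 * r ^+ 5 -> tail_at s2 m <= 3600 * r ^+ 5 ->
  s1`_m.+2 = s2`_m.+2 -> s1`_m.+1 - s2`_m.+1 <= 424%:Z /\ s1`_m - s2`_m <= 830%:Z.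
Proof.
move=> /(tail_form_window r_range) [/andP[c1 c1'] /andP[b1 b1']].
move=> /(tail_form_window r_range) [/andP[c2 c2'] /andP[b2 b2']] ez.
have /andP[r_lb _] := r_range; have r_gt0 : 0 < r by lra.
move: c1 c1' b1 b1' c2 c2' b2 b2'; rewrite ez.
move: (s1`_m) (s2`_m) (s1`_m.+1) (s2`_m.+1) (s2`_m.+2) => x1 x2 y1 y2 z.
have -> : (x1%:~R : R) = x2%:~R + (x1 - x2)%:~R by rewrite rmorphB /=; ring.
have -> : (y1%:~R : R) = y2%:~R + (y1 - y2)%:~R by rewrite rmorphB /=; ring.
move: (x1 - x2) (y1 - y2) => dx dy c1 c1' b1 b1' c2 c2' b2 b2'.
have dy_le : dy <= 424%:Z by apply: (intr_le_of_mul r_gt0 (B := 780)); lra.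
split=> //; apply: (intr_le_of_mul r_gt0 (B := 1528)); last lra.
have : (dy%:~R : R) <= 424 by rewrite pmulrn ler_int.
lra.
Qed.

End Sequences.

End TribonacciForms.

Theorem theorem1 (n : int) (k : nat) :
  3 <= n -> is_t n k ->
  forall L : seq (seq int), uniq L ->
    (forall s, s \in L -> pos_trib_seq n k s) ->
    (size L <= 561001)%N.
Proof.
move=> hn ht L uL hL.
have [r [r_range r_root]] := tribonacci_constant realalg.
have [m ek] : exists m, k = m.+3 by exists (k - 3)%N; have := is_t_ge4 hn ht; lia.
subst k.
have small s : s \in L -> tail_at r s m <= 3600 * r ^+ 5.
  by move=> hs; apply: (is_t_tail_at_le r_root r_range hn ht (hL s hs)).
have close s1 s2 : s1 \in L -> s2 \in L ->
    s1`_m.+1 - s2`_m.+1 <= 424%:Z /\ s1`_m - s2`_m <= 830%:Z.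
  move=> h1 h2; apply: (close_last_terms r_range (small _ h1) (small _ h2)).
  by rewrite (pos_trib_seq_last (hL _ h1)) (pos_trib_seq_last (hL _ h2)).
apply: leq_trans (uniq_size_le_box (f := fun s => s`_m.+1) (g := fun s => s`_m)
                                    (w1 := 424) (w2 := 830) uL _ _ _) _.
- by move=> s1 s2 h1 h2 e1 e0; apply: (pos_trib_seq_eq (hL _ h1) (hL _ h2)).
- by move=> s1 s2 h1 h2; case: (close s1 s2 h1 h2).
- by move=> s1 s2 h1 h2; case: (close s1 s2 h1 h2).
- by apply/idP; vm_compute.
Qed.
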